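(* For all integers $0\le r\le n$, \[ \log s(n,r) \le \frac{1}{n-r+1}\binom{n}{r}\log(n-r+2). \]
   Context: $s(n,r)$ denotes the number of sparse paving matroids of rank $r$ on the ground set $[n]=\{1,\dots,n\}$. A matroid of rank $r$ is sparse paving if every $r$-subset of the ground set is either a basis or a circuit-hyperplane (equivalently, the matroid and its dual are both paving, where paving means every circuit has at least $r$ elements). $\log$ is the logarithm to base $2$. *)

From mathcomp Require Import all_boot.
From Stdlib Require Import Reals.

Set Implicit Arguments.
Unset Strict Implicit.
Unset Printing Implicit Defensive.

Definition is_matroid (n : nat) (B : {set {set 'I_n}}) : bool :=
  (B != set0) &&
  [forall B1 in B, forall B2 in B, forall x in B1 :\: B2,
     exists y in B2 :\: B1, y |: (B1 :\ x) \in B].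

Definition has_rank (n : nat) (B : {set {set 'I_n}}) (r : nat) : bool :=
  [forall b in B, #|b| == r].

Definition independent (n : nat) (B : {set {set 'I_n}}) (I : {set 'I_n}) : bool :=
  [exists b in B, I \subset b].

Definition circuit (n : nat) (B : {set {set 'I_n}}) (C : {set 'I_n}) : bool :=
  ~~ independent B C && [forall D : {set 'I_n}, (D \proper C) ==> independent B D].

Definition dual (n : nat) (B : {set {set 'I_n}}) : {set {set 'I_n}} :=
  [set ~: b | b in B].

Definition paving (n : nat) (B : {set {set 'I_n}}) (r : nat) : bool :=
  [forall C : {set 'I_n}, circuit B C ==> (r <= #|C|)].

Definition sparse_paving (n : nat) (B : {set {set 'I_n}}) (r : nat) : bool :=
  [&& is_matroid B, has_rank B r, paving B r & paving (dual B) (n - r)].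

Definition s (n r : nat) : nat :=
  #|[set B : {set {set 'I_n}} | sparse_paving B r]|.

Definition log2 (x : R) : R := (ln x / ln 2)%R.

(* A sparse paving matroid of rank r is determined by its non-basis r-sets, and two
   of them never share r - 1 elements (exchange against a basis inside their union,
   which exists by duality).  Hence, for every (r-1)-set T, the non-basis r-sets
   containing T form a set of size at most 1 among the n - r + 1 supersets of T,
   which leaves n - r + 2 possibilities.  Every r-set contains r such T, so Shearer's
   lemma gives s(n,r)^r <= (n-r+2)^C(n,r-1), and r C(n,r) = (n-r+1) C(n,r-1).
   Shearer's lemma is proved by induction on the ground set, splitting the family
   at a point; the step is a Hölder-type inequality derived from AM-GM. *)

From mathcomp Require Import all_boot all_order all_algebra zify.

Set Implicit Arguments.
Unset Strict Implicit.
Unset Printing Implicit Defensive.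

Section HolderStep.
Import Order.TTheory GRing.Theory Num.Theory.
Local Open Scope ring_scope.

Variable R : realFieldType.

Lemma expn_eq0_of_le0 (x : R) (t : nat) :
  (0 < t)%N -> 0 <= x -> x ^+ t <= 0 -> x = 0.
Proof.
move=> t_gt0 x_ge0 xt_le0; apply/eqP.
suff : x ^+ t == 0 by rewrite expf_eq0 t_gt0.
by rewrite eq_le xt_le0 exprn_ge0.
Qed.

Lemma le_mul_of_expn_le (x z a Q : R) (t : nat) :
  (0 < t)%N -> 0 <= x -> 0 <= z -> 0 <= a ->
  x ^+ t <= Q * a ^+ t -> Q < z ^+ t -> x <= z * a ?= iff (a == 0).
Proof.
move=> t_gt0 x_ge0 z_ge0 a_ge0 xt_le Q_lt.
have [a0 | a_neq0] := eqVneq a 0.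
  rewrite a0 expr0n gtn_eqF // mulr0 in xt_le *.
  by rewrite mulr0 (expn_eq0_of_le0 t_gt0 x_ge0 xt_le); apply/leif_refl.
have a_gt0 : 0 < a by rewrite lt0r a_neq0.
suff x_lt : x < z * a by split; [exact: ltW | rewrite lt_eqF].
rewrite -(ltr_pXn2r t_gt0) ?nnegrE ?mulr_ge0 //.
by apply: le_lt_trans xt_le _; rewrite exprMn ltr_pM2r ?exprn_gt0.
Qed.

Lemma prod_le_mean_expn (I : finType) (J : {pred I}) (c : I -> R) (t : nat) :
  (t <= #|J|)%N -> {in J, forall i, 0 <= c i} ->
  (\sum_(i in J) c i) / #|J|%:R <= 1 ->
  \prod_(i in J) c i <= ((\sum_(i in J) c i) / #|J|%:R) ^+ t.
Proof.
move=> tJ c_ge0 mean_le1; apply: le_trans (leif_AGM c_ge0).1 _.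
by rewrite ler_wiXn2l // divr_ge0 ?sumr_ge0.
Qed.

(* A Hölder-type inequality: splitting a_i + b_i into the proportions a_i/(a_i+b_i)
   and b_i/(a_i+b_i), AM-GM bounds x and y by Q^(1/t) times the mean proportions,
   which add up to 1. *)
Lemma expn_add_le_prod_add (I : finType) (J : {pred I}) (a b : I -> R)
    (M x y : R) (t : nat) :
  (0 < t)%N -> (t <= #|J|)%N -> (forall i, 0 <= a i) -> (forall i, 0 <= b i) ->
  0 <= M -> 0 <= x -> 0 <= y ->
  x ^+ t <= M * \prod_(i in J) a i -> y ^+ t <= M * \prod_(i in J) b i ->
  (x + y) ^+ t <= M * \prod_(i in J) (a i + b i).
Proof.
move=> t_gt0 tJ a_ge0 b_ge0 M_ge0 x_ge0 y_ge0 hx hy.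
have ab_ge0 i : 0 <= a i + b i by rewrite addr_ge0.
set Q := M * \prod_(i in J) (a i + b i).
have Q_ge0 : 0 <= Q by rewrite mulr_ge0 ?prodr_ge0.
have [/exists_inP[i iJ] | /exists_inP no_ab0] :=
  boolP [exists i in J, a i + b i == 0].
  rewrite paddr_eq0 // => /andP[/eqP ai0 /eqP bi0].
  rewrite (bigD1 i) //= ai0 mul0r mulr0 in hx.
  rewrite (bigD1 i) //= bi0 mul0r mulr0 in hy.
  by rewrite (expn_eq0_of_le0 t_gt0 x_ge0 hx) (expn_eq0_of_le0 t_gt0 y_ge0 hy)
    addr0 expr0n gtn_eqF.
have ab_neq0 i : i \in J -> a i + b i != 0.
  by move=> iJ; apply/eqP => abi0; apply: no_ab0; exists i; rewrite ?abi0.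
pose k := #|J|%:R : R.
pose rho i := a i / (a i + b i).
pose sig i := b i / (a i + b i).
pose al := (\sum_(i in J) rho i) / k.
pose be := (\sum_(i in J) sig i) / k.
have al_ge0 : 0 <= al by rewrite divr_ge0 ?sumr_ge0 // => i _; rewrite divr_ge0.
have be_ge0 : 0 <= be by rewrite divr_ge0 ?sumr_ge0 // => i _; rewrite divr_ge0.
have albe : al + be = 1.
  rewrite -mulrDl -big_split /= (eq_bigr (fun _ => 1)) ?sumr_const ?mulfV //.
    by rewrite pnatr_eq0 -lt0n (leq_trans t_gt0).
  by move=> i iJ; rewrite -mulrDl mulfV ?ab_neq0.
have prod_split (c : I -> R) : (forall i, i \in J -> c i = (a i + b i) * (c i / (a i + b i))) ->
    M * \prod_(i in J) c i = Q * \prod_(i in J) (c i / (a i + b i)).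
  by move=> cE; rewrite /Q -mulrA -big_split /=; congr (_ * _); apply: eq_bigr.
have hx' : x ^+ t <= Q * al ^+ t.
  rewrite (prod_split a) in hx; last by move=> i iJ; rewrite mulrC divfK ?ab_neq0.
  apply: le_trans hx _; rewrite ler_wpM2l // prod_le_mean_expn //.
    by move=> i _; rewrite divr_ge0.
  by have : al <= 1 by rewrite -albe lerDl.
have hy' : y ^+ t <= Q * be ^+ t.
  rewrite (prod_split b) in hy; last by move=> i iJ; rewrite mulrC divfK ?ab_neq0.
  apply: le_trans hy _; rewrite ler_wpM2l // prod_le_mean_expn //.
    by move=> i _; rewrite divr_ge0.
  by have : be <= 1 by rewrite -albe lerDr.
rewrite leNgt; apply/negP => Q_lt.
have xy_ge0 : 0 <= x + y by rewrite addr_ge0.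
have := leifD (le_mul_of_expn_le t_gt0 x_ge0 xy_ge0 al_ge0 hx' Q_lt)
              (le_mul_of_expn_le t_gt0 y_ge0 xy_ge0 be_ge0 hy' Q_lt).
rewrite -mulrDr albe mulr1 => /leifP; rewrite ltxx.
case: ifP => // /andP[/eqP al0 /eqP be0] _.
by move: albe; rewrite al0 be0 addr0 => /eqP; rewrite eq_sym oner_eq0.
Qed.


End HolderStep.

Section NatHolder.
Import Order.TTheory GRing.Theory Num.Theory.
Local Open Scope ring_scope.

Lemma expn_add_le_prod (I : finType) (P J : {pred I}) (a b m : I -> nat) (x y t : nat) :
  (0 < t)%N -> (t <= #|[predI P & J]|)%N ->
  {in P, forall i, i \in J -> a i + b i <= m i}%N ->
  {in P, forall i, i \notin J -> a i <= m i /\ b i <= m i}%N ->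
  (x ^ t <= \prod_(i in P) a i)%N -> (y ^ t <= \prod_(i in P) b i)%N ->
  ((x + y) ^ t <= \prod_(i in P) m i)%N.
Proof.
move=> t_gt0 tJ abJ abJ' hx hy.
pose K := [predI P & [predC J]].
have prod_split (f : I -> nat) : (\prod_(i in P) f i)%:R =
    (\prod_(i in K) (f i)%:R) * \prod_(i in [predI P & J]) (f i)%:R :> rat.
  rewrite natr_prod (bigID (mem J)) /= mulrC.
  by congr (_ * _); apply: eq_bigl => i; rewrite !inE.
have mK_ge0 : 0 <= \prod_(i in K) (m i)%:R :> rat by rewrite prodr_ge0.
have off_J (c : I -> nat) : {in K, forall i, c i <= m i}%N ->
    forall z, (z ^ t <= \prod_(i in P) c i)%N ->
    z%:R ^+ t <= \prod_(i in K) (m i)%:R * \prod_(i in [predI P & J]) (c i)%:R :> rat.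
  move=> cm z hz; rewrite -natrX; apply: le_trans (_ : (\prod_(i in P) c i)%:R <= _).
    by rewrite ler_nat.
  rewrite prod_split ler_wpM2r ?prodr_ge0 //.
  by apply: ler_prod => i iK; rewrite ler0n ler_nat cm.
have abK : {in K, forall i, a i <= m i /\ b i <= m i}%N.
  by move=> i; rewrite !inE => /andP[iP iJ']; exact: abJ'.
have hx' := off_J a (fun i iK => (abK i iK).1) x hx.
have hy' := off_J b (fun i iK => (abK i iK).2) y hy.
rewrite -(ler_nat rat) natrX natrD prod_split.
apply: le_trans (expn_add_le_prod_add t_gt0 tJ _ _ mK_ge0 _ _ hx' hy') _ => //.
rewrite ler_wpM2l //; apply: ler_prod => i; rewrite !inE => /andP[iP iJ].
by rewrite -natrD ler0n ler_nat abJ.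
Qed.

End NatHolder.

Definition trace (V : finType) (F : {set {set V}}) (S : {set V}) : {set {set V}} :=
  [set A :&: S | A in F].

Section SplitAt.
Variables (V : finType) (F : {set {set V}}) (v : V).

Lemma card_split_at :
  #|F| = #|[set A in F | v \notin A]| + #|[set A :\ v | A in F & v \in A]|.
Proof.
rewrite card_in_imset; last first.
  by move=> A B; rewrite !inE => /andP[_ vA] /andP[_ vB] eqAB;
    rewrite -(setD1K vA) -(setD1K vB) eqAB.
rewrite -(cardsID [set A : {set V} | v \in A] F) addnC.
by congr (_ + _); apply: eq_card => A; rewrite !inE // andbC.
Qed.

Lemma trace_split_at_notin (S : {set V}) :
  v \notin S -> trace [set A :\ v | A in F & v \in A] S \subset trace F S.
Proof.
move=> vS; apply/subsetP => _ /imsetP[_ /imsetP[A AF ->] ->].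
have -> : (A :\ v) :&: S = A :&: S.
  by apply/setP => w; rewrite !inE; case: eqP => [->|]; rewrite ?(negbTE vS) ?andbF.
by apply: imset_f; move: AF; rewrite inE => /andP[].
Qed.

(* The traces of the two halves are disjoint once v is put back into the second one. *)
Lemma card_trace_split_at (S : {set V}) : v \in S ->
  #|trace [set A in F | v \notin A] S| + #|trace [set A :\ v | A in F & v \in A] S|
    <= #|trace F S|.
Proof.
move=> vS; set T0 := trace _ S; set T1 := trace _ S.
have vT1 B : B \in T1 -> v \notin B.
  by move=> /imsetP[_ /imsetP[A _ ->] ->]; rewrite !inE eqxx.
have addv_inj : {in T1 &, injective (fun B => v |: B)}.
  by move=> B C /vT1 vB /vT1 vC eqBC; rewrite -(setU1K vB) -(setU1K vC) eqBC.
rewrite -(card_in_imset addv_inj) -cardsUI.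
have -> : T0 :&: [set v |: B | B in T1] = set0.
  apply/setP => B; rewrite !inE; apply/negbTE.
  apply/nandP; case: (boolP (v \in B)) => vB; [left | right].
    by apply/imsetP => -[A]; rewrite !inE => /andP[_ vA] eqB; rewrite eqB !inE (negbTE vA) in vB.
  by apply/imsetP => -[C _ eqB]; rewrite eqB !inE eqxx in vB.
rewrite cards0 addn0; apply/subset_leq_card/subsetP => B; rewrite inE => /orP[].
  by move=> /imsetP[A]; rewrite inE => /andP[AF _] ->; apply: imset_f.
move=> /imsetP[_ /imsetP[_ /imsetP[A AF ->] ->] ->].
move: AF; rewrite inE => /andP[AF vA].
have -> : v |: ((A :\ v) :&: S) = A :&: S.
  by apply/setP => w; rewrite !inE; case: eqP => [-> | //]; rewrite vA vS.
exact: imset_f.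
Qed.

End SplitAt.

Lemma shearer (V I : finType) (S : I -> {set V}) (P : {pred I}) (t : nat)
    (U : {set V}) (F : {set {set V}}) :
  0 < t -> {in F, forall A : {set V}, A \subset U} ->
  {in U, forall v, t <= #|[set i in P | v \in S i]|} ->
  #|F| ^ t <= \prod_(i in P) #|trace F (S i)|.
Proof.
move=> t_gt0; move: {2}#|U| (erefl #|U|) => k.
elim: k U F => [|k IH] U F cardU FU cover.
  have [-> | [A0 A0F]] := set_0Vmem F; first by rewrite cards0 exp0n.
  have F_le1 : #|F| <= 1.
    apply/card_le1_eqP => A B /FU + /FU; move/eqP: cardU; rewrite cards_eq0 => /eqP ->.
    by rewrite !subset0 => /eqP -> /eqP ->.
  apply: leq_trans (_ : 1 <= _); first by rewrite -(exp1n t) leq_exp2r.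
  rewrite prodn_gt0 // => i; apply/card_gt0P; exists (A0 :&: S i).
  exact: imset_f.
have [v vU] : exists v, v \in U by apply/card_gt0P; rewrite cardU.
have cardUv : #|U :\ v| = k by move: cardU; rewrite (cardsD1 v) vU => -[].
have coverUv : {in U :\ v, forall w, t <= #|[set i in P | w \in S i]|}.
  by move=> w /setD1P[_ /cover].
rewrite (card_split_at F v).
set F0 := [set A in F | _]; set F1 := [set _ | A in F & _].
apply: (expn_add_le_prod (J := [pred i | v \in S i])
  (a := fun i => #|trace F0 (S i)|) (b := fun i => #|trace F1 (S i)|)) => //.
- apply: leq_trans (cover v vU) _; apply/subset_leq_card/subsetP => i.
  by rewrite !inE.
- by move=> i _ vSi; exact: card_trace_split_at.
- move=> i _ vSi; split; apply/subset_leq_card; last exact: trace_split_at_notin.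
  by apply: imsetS; apply/subsetP => A; rewrite inE => /andP[].
- apply: IH cardUv _ coverUv => A; rewrite inE => /andP[AF vA].
  by rewrite subsetD1 FU.
- apply: IH cardUv _ coverUv => B /imsetP[A]; rewrite inE => /andP[AF _] ->.
  exact: setSD (FU A AF).
Qed.

Lemma setU1_eq_of_card (T : finType) (y : T) (A Z : {set T}) :
  A \subset Z -> #|Z| = #|A|.+1 -> y \in Z -> y \notin A -> y |: A = Z.
Proof.
move=> AZ cardZ yZ yA; apply/eqP; rewrite eqEcard subUset sub1set yZ AZ /=.
by rewrite cardsU1 yA cardZ.
Qed.

Lemma card_basis n (B : {set {set 'I_n}}) r b : has_rank B r -> b \in B -> #|b| = r.
Proof. by move=> rkB bB; apply/eqP; exact: (forall_inP rkB). Qed.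

Lemma matroid_exchange n (B : {set {set 'I_n}}) b1 b2 x :
  is_matroid B -> b1 \in B -> b2 \in B -> x \in b1 :\: b2 ->
  exists2 y, y \in b2 :\: b1 & y |: (b1 :\ x) \in B.
Proof.
case/andP=> _ /forall_inP exch b1B b2B xb; apply/exists_inP.
exact: (forall_inP (forall_inP (exch b1 b1B) b2 b2B) x xb).
Qed.

Lemma paving_independent n (B : {set {set 'I_n}}) r (D : {set 'I_n}) :
  paving B r -> #|D| < r -> independent B D.
Proof.
move=> pav cardD; apply: contraT => depD.
pose P C := ~~ independent B C && (C \subset D).
have [C /andP[depC CD] minC] :=
  @arg_minnP _ D P (fun C => #|C|) (introT andP (conj depD (subxx D))).
have : circuit B C.
  rewrite /circuit depC; apply/forall_inP => E ltEC; apply: contraT => depE.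
  have := minC E; rewrite /P depE (subset_trans (proper_sub ltEC) CD) => /(_ isT).
  by rewrite leqNgt proper_card.
move/(implyP (forallP pav C)).
by rewrite leqNgt (leq_ltn_trans (subset_leq_card CD) cardD).
Qed.

Lemma dual_paving_basis_sub n (B : {set {set 'I_n}}) r (Z : {set 'I_n}) :
  paving (dual B) (n - r) -> r < #|Z| -> exists2 b, b \in B & b \subset Z.
Proof.
move=> dpav cardZ.
have : #|~: Z| < n - r.
  by have := cardsC Z; have := max_card Z; rewrite card_ord; lia.
case/(paving_independent dpav)/exists_inP => _ /imsetP[b bB ->].
by rewrite setCS; exists b.
Qed.

(* Two non-bases of size r+1 sharing r elements coincide: the r shared elements
   extend to a basis b1 = c + T, a basis b2 inside X :|: Y exists by duality, and
   exchanging c out of b1 for an element of b2 would turn X or Y into a basis. *)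
Lemma sparse_paving_nonbasis_eq n (B : {set {set 'I_n}}) r (X Y T : {set 'I_n}) :
  sparse_paving B r.+1 -> #|X| = r.+1 -> #|Y| = r.+1 -> X \notin B -> Y \notin B ->
  T \subset X -> T \subset Y -> #|T| = r -> X = Y.
Proof.
case/and4P=> mat rkB pav dpav cardX cardY XB YB TX TY cardT.
have nonbasis_ext (Z : {set 'I_n}) y : T \subset Z -> #|Z| = r.+1 -> Z \notin B ->
    y \notin T -> y |: T \in B -> y \notin Z.
  move=> TZ cardZ ZB yT yTB; apply: contra ZB => yZ.
  by rewrite -(setU1_eq_of_card TZ _ yZ yT) // cardZ cardT.
have [b1 b1B Tb1] : exists2 b1, b1 \in B & T \subset b1.
  by apply/exists_inP; apply: paving_independent pav _; rewrite cardT.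
have cardb1 : #|b1| = r.+1 := card_basis rkB b1B.
have [_ [c cb1 cT]] : T \subset b1 /\ exists2 c, c \in b1 & c \notin T.
  by apply/properP; rewrite properEcard Tb1 cardb1 cardT ltnSn.
have b1E : c |: T = b1 by apply: setU1_eq_of_card; rewrite ?cardb1 ?cardT.
apply/eqP; apply: contraT => neqXY.
have YX : ~~ (Y \subset X).
  by apply: contra neqXY => YX; rewrite eq_sym eqEcard YX cardX cardY /=.
have [b2 b2B b2XY] : exists2 b2, b2 \in B & b2 \subset X :|: Y.
  apply: dual_paving_basis_sub dpav _; rewrite -cardX.
  exact: proper_card (properUl YX).
have cTB : c |: T \in B by rewrite b1E.
have cb2 : c \in b1 :\: b2.
  rewrite inE cb1 andbT; apply: contra (subsetP b2XY c) _.
  by rewrite inE negb_or (nonbasis_ext X) ?(nonbasis_ext Y).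
have [y /setDP[yb2 yb1]] := matroid_exchange mat b1B b2B cb2.
have -> : b1 :\ c = T by rewrite -b1E setU1K.
have yT : y \notin T by apply: contra yb1; apply: subsetP.
move=> yTB; have := subsetP b2XY y yb2.
by rewrite inE (negbTE (nonbasis_ext X y _ _ _ _ _)) ?(negbTE (nonbasis_ext Y y _ _ _ _ _)).
Qed.

Lemma card_supersets1 (T : finType) (A : {set T}) r : #|A| = r ->
  #|[set X : {set T} | (#|X| == r.+1) && (A \subset X)]| <= #|~: A|.
Proof.
move=> cardA; apply: leq_trans (leq_imset_card (fun c => c |: A) _).
apply/subset_leq_card/subsetP => X; rewrite inE => /andP[/eqP cardX AX].
have [_ [c cX cA]] : A \subset X /\ exists2 c, c \in X & c \notin A.
  by apply/properP; rewrite properEcard AX cardX cardA ltnSn.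
by apply/imsetP; exists c; rewrite ?inE // (setU1_eq_of_card AX _ cX cA) ?cardA.
Qed.

Lemma card_subsets1 (T : finType) (X : {set T}) r : #|X| = r.+1 ->
  r.+1 <= #|[set A : {set T} | (#|A| == r) && (A \subset X)]|.
Proof.
move=> cardX.
have del_inj : {in X &, injective (fun x => X :\ x)}.
  move=> x y xX yX eqXxy; apply/eqP; apply: contraT => neq_xy.
  have : x \in X :\ y by rewrite !inE neq_xy.
  by rewrite -eqXxy !inE eqxx.
rewrite -cardX -(card_in_imset del_inj).
apply/subset_leq_card/subsetP => _ /imsetP[x xX ->].
by rewrite inE subsetDl andbT -eqSS -cardX (cardsD1 x X) xX.
Qed.

Lemma card_small_family (T : finType) (S : {set T}) (F : {set {set T}}) :
  {in F, forall A : {set T}, A \subset S /\ #|A| <= 1} -> #|F| <= #|S|.+1.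
Proof.
move=> smallF; apply: leq_trans (_ : #|set0 |: [set [set x] | x in S]| <= _).
  apply/subset_leq_card/subsetP => A AF; have [AS cardA] := smallF A AF.
  have [-> | [x xA]] := set_0Vmem A; first by rewrite setU11.
  have -> : A = [set x].
    by apply/eqP; rewrite eq_sym eqEcard sub1set xA cards1.
  by rewrite setU1r // imset_f // (subsetP AS).
by rewrite cardsU1 -add1n leq_add ?leq_b1 ?leq_imset_card.
Qed.

Definition nonbases n (B : {set {set 'I_n}}) r : {set {set 'I_n}} :=
  [set X : {set 'I_n} | (#|X| == r) && (X \notin B)].

Lemma nonbases_inj (n r : nat) :
  {in [pred B : {set {set 'I_n}} | has_rank B r] &, injective (fun B => nonbases B r)}.
Proof.
move=> B1 B2 rkB1 rkB2 eqN; apply/setP => X.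
have [cardX | cardX] := eqVneq #|X| r.
  by move/setP/(_ X): eqN; rewrite !inE cardX eqxx /= => /negb_inj.
have notin (B : {set {set 'I_n}}) : has_rank B r -> X \notin B.
  by move=> rkB; apply: contra cardX => /(card_basis rkB)/eqP.
by rewrite (negbTE (notin _ rkB1)) (negbTE (notin _ rkB2)).
Qed.

Section Counting.
Variables n r : nat.

Let SP := [set B : {set {set 'I_n}} | sparse_paving B r.+1].
Let S (T : {set 'I_n}) := [set X : {set 'I_n} | (#|X| == r.+1) && (T \subset X)].

Lemma card_trace_nonbases (T : {set 'I_n}) : #|T| = r ->
  #|trace [set nonbases B r.+1 | B in SP] (S T)| <= (n - r).+1.
Proof.
move=> cardT; apply: leq_trans (_ : #|S T|.+1 <= _).
  apply: card_small_family => _ /imsetP[_ /imsetP[B spB ->] ->].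
  split; first exact: subsetIr.
  apply/card_le1_eqP => X Y; rewrite !inE.
  move=> /andP[/andP[/eqP cardX XB] /andP[_ TX]] /andP[/andP[/eqP cardY YB] /andP[_ TY]].
  rewrite inE in spB; symmetry.
  exact: sparse_paving_nonbasis_eq spB cardX cardY XB YB TX TY cardT.
rewrite ltnS; apply: leq_trans (card_supersets1 cardT) _.
by have := cardsC T; rewrite card_ord cardT; lia.
Qed.

Lemma s_expn_le : s n r.+1 ^ r.+1 <= (n - r).+1 ^ 'C(n, r).
Proof.
pose P := [set T : {set 'I_n} | #|T| == r].
pose U := [set X : {set 'I_n} | #|X| == r.+1].
have -> : s n r.+1 = #|[set nonbases B r.+1 | B in SP]|.
  rewrite card_in_imset // => B1 B2; rewrite !inE => /and4P[_ rkB1 _ _] /and4P[_ rkB2 _ _].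
  exact: nonbases_inj.
apply: leq_trans (shearer (S := S) (P := mem P) (U := U) _ _ _) _ => //.
- move=> _ /imsetP[B _ ->]; apply/subsetP => X.
  by rewrite !inE => /andP[].
- move=> X; rewrite inE => /eqP cardX; apply: leq_trans (card_subsets1 cardX) _.
  by apply/subset_leq_card/subsetP => T; rewrite !inE cardX eqxx.
apply: leq_trans (_ : \prod_(T in P) (n - r).+1 <= _).
  by apply: leq_prod => T; rewrite inE => /eqP /card_trace_nonbases.
by rewrite prod_nat_const card_draws card_ord.
Qed.

End Counting.

Lemma s_rank0_le1 n : s n 0 <= 1.
Proof.
have rank0E (B : {set {set 'I_n}}) : is_matroid B -> has_rank B 0 -> B = [set set0].
  move=> /andP[/set0Pn[b bB] _] rkB.
  have b0 : b = set0 by apply/eqP; rewrite -cards_eq0 (card_basis rkB bB).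
  apply/setP => X; rewrite inE; apply/idP/eqP => [XB | ->]; last by rewrite -b0.
  by apply/eqP; rewrite -cards_eq0 (card_basis rkB XB).
apply/card_le1_eqP => B1 B2; rewrite !inE => /and4P[mat1 rk1 _ _] /and4P[mat2 rk2 _ _].
by rewrite (rank0E B1 mat1 rk1) (rank0E B2 mat2 rk2).
Qed.

From Stdlib Require Import Reals Lra.

Lemma INR_expn (a k : nat) : INR (expn a k) = (INR a ^ k)%R.
Proof. by elim: k => // k IH; rewrite expnS -multE mult_INR IH. Qed.

(* Stdlib's [ln] is 0 on nonpositive arguments. *)
Lemma log2_INR0 : log2 (INR 0) = 0%R.
Proof. by rewrite /log2 /ln; case: Rlt_dec => [/Rlt_irrefl | _] //; rewrite /Rdiv Rmult_0_l. Qed.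

Lemma log2_INR_ge0 (x : nat) : (0 <= log2 (INR x))%R.
Proof.
case: x => [|x]; first by rewrite log2_INR0; apply: Rle_refl.
have ln2_pos : (0 < ln 2)%R by rewrite -ln_1; apply: ln_increasing; lra.
apply: Rmult_le_pos; last by apply/Rlt_le/Rinv_0_lt_compat.
case: x => [|x]; first by rewrite /= ln_1; apply: Rle_refl.
rewrite -ln_1; apply/Rlt_le/ln_increasing; first lra.
by apply: lt_1_INR; lia.
Qed.

Lemma ln_le (u v : R) : (0 < u -> u <= v -> ln u <= ln v)%R.
Proof.
move=> u_pos /Rle_lt_or_eq_dec[uv | ->]; last exact: Rle_refl.
exact/Rlt_le/ln_increasing.
Qed.

Lemma log2_le_of_expn_le (x b k c : nat) : 0 < k -> 0 < b -> expn x k <= expn b c ->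
  (log2 (INR x) <= INR c / INR k * log2 (INR b))%R.
Proof.
move=> k_gt0 b_gt0 le_xb; have k_pos : (0 < INR k)%R by apply/lt_0_INR/ltP.
case: x le_xb => [|x] le_xb.
  rewrite log2_INR0; apply: Rmult_le_pos (log2_INR_ge0 b).
  by apply: Rmult_le_pos (pos_INR c) _; apply/Rlt_le/Rinv_0_lt_compat.
have x_pos : (0 < INR x.+1)%R by apply/lt_0_INR/ltP.
have b_pos : (0 < INR b)%R by apply/lt_0_INR/ltP.
have ln2_pos : (0 < ln 2)%R by rewrite -ln_1; apply: ln_increasing; lra.
have le_ln : (INR k * ln (INR x.+1) <= INR c * ln (INR b))%R.
  rewrite -!ln_pow //; apply: ln_le; first exact: pow_lt.
  by rewrite -!INR_expn; apply/le_INR/leP.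
rewrite /log2.
replace (INR c / INR k * (ln (INR b) / ln 2))%R with (INR c * ln (INR b) / INR k / ln 2)%R
  by (field; lra).
apply: Rmult_le_compat_r; first exact/Rlt_le/Rinv_0_lt_compat.
apply: (Rmult_le_reg_l (INR k)) => //.
by replace (INR k * (INR c * ln (INR b) / INR k))%R with (INR c * ln (INR b))%R by (field; lra).
Qed.

Lemma INR_bin_ratio n r : r < n ->
  (INR 'C(n, r) / INR r.+1 = / INR (n - r) * INR 'C(n, r.+1))%R.
Proof.
move=> lt_rn; have nr_pos : (0 < INR (n - r))%R by apply/lt_0_INR/ltP; lia.
have r_pos : (0 < INR r.+1)%R by apply/lt_0_INR/ltP.
have := f_equal INR (mul_bin_left n r); rewrite -!multE !mult_INR => binE.
field_simplify_eq; try lra; nra.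
Qed.

Theorem theorem1p2 (n r : nat) (hrn : (r <= n)%N) :
  (log2 (INR (s n r)) <=
   / INR (n - r + 1) * INR 'C(n, r) * log2 (INR (n - r + 2)))%R.
Proof.
case: r hrn => [|r] hrn.
  apply: Rle_trans (log2_le_of_expn_le (k := 1) (b := 1) (c := 0) _ _ _) _ => //.
    by rewrite expn1 s_rank0_le1.
  rewrite /= /Rdiv !Rmult_0_l; apply: Rmult_le_pos (log2_INR_ge0 _).
  by apply: Rmult_le_pos (pos_INR _); apply/Rlt_le/Rinv_0_lt_compat/lt_0_INR; lia.
have -> : n - r.+1 + 1 = n - r by lia.
have -> : n - r.+1 + 2 = (n - r).+1 by lia.
by rewrite -INR_bin_ratio //; apply: log2_le_of_expn_le (s_expn_le n r).
Qed.
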